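(* Let $(\mathcal M,g_{ab})$ be a 4-dimensional Lorentzian manifold with a Killing vector $\vec\zeta$, and let $x$ be a point at which $\vec\zeta$ is timelike. Then $\mathcal S_{abc}\bar{\mathcal S}^{abc}|_x\ge0$, with equality if and only if $\mathcal S_{abc}|_x=0$.
   Context: $(\mathcal M,g_{ab})$ is a 4-dimensional Lorentzian manifold (signature $(-,+,+,+)$) with volume form $\eta_{abcd}$ and Weyl tensor $C_{abcd}$; square brackets denote antisymmetrization. For a Killing vector $\vec\zeta$: $\lambda=\zeta_a\zeta^a$, $F_{ab}=\nabla_a\zeta_b$, $F^*_{ab}=\tfrac12\eta_{abcd}F^{cd}$, $\mathcal F_{ab}=F_{ab}+iF^*_{ab}$; $C^*_{abcd}=\tfrac12\eta_{cdpq}C_{ab}{}^{pq}$, $\mathcal C_{abcd}=C_{abcd}+iC^*_{abcd}$; Ernst one-form $\sigma_a=2\mathcal F_{ab}\zeta^b$; $\gamma_{ab}=\zeta_a\zeta_b-\lambda g_{ab}$. The space-time Simon tensor is $\mathcal S_{abc}=\gamma_{a[b}\mathcal C_{c]mrd}\zeta^m\mathcal F^{rd}+4\zeta^m\zeta^r\mathcal C_{mar[c}\sigma_{b]}$. *)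

(* Pointwise (tangent space at x) algebraic formalization. *)
From HB Require Import structures.
From mathcomp Require Import all_boot all_order all_algebra.
Set Implicit Arguments. Unset Strict Implicit. Unset Printing Implicit Defensive.
Import Order.TTheory GRing.Theory Num.Theory.
Local Open Scope ring_scope.

Section Simon.
Variable C : numClosedFieldType.

(* components w.r.t. a basis of T_x M, indices in 'I_4 *)
Definition sum4 (f : 'I_4 -> C) : C := \sum_(i < 4) f i.

Definition real_vec (v : 'I_4 -> C) := forall a, v a \is Num.real.
Definition real_mx (g : 'M[C]_4) := forall a b, g a b \is Num.real.

Definition minkowski_diag : 'M[C]_4 :=
  diag_mx (\row_(i < 4) (if i == ord0 then -1 else 1)).
Definition lorentzian (g : 'M[C]_4) : Prop :=
  real_mx g /\ g^T = g /\
  exists P : 'M[C]_4, real_mx P /\ P \in unitmx /\ P^T *m g *m P = minkowski_diag.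

Definition ginv (g : 'M[C]_4) : 'M[C]_4 := invmx g.

(* Levi-Civita symbol [abcd] (epsilon_{0123} = 1) *)
Definition levi (a b c d : 'I_4) : C :=
  \det (\matrix_(i < 4, j < 4) ((nth a [:: a; b; c; d] i == j)%:R : C)).

Definition eta (g : 'M[C]_4) (a b c d : 'I_4) : C :=
  sqrtC `|\det g| * levi a b c d.

Variables (g : 'M[C]_4) (zeta : 'I_4 -> C) (F : 'I_4 -> 'I_4 -> C)
          (W : 'I_4 -> 'I_4 -> 'I_4 -> 'I_4 -> C).
(* zeta = zeta_a (index down), F = F_{ab} = nabla_a zeta_b at x,
   W = C_{abcd} Weyl tensor at x (all indices down) *)

Definition zetaU (a : 'I_4) : C := sum4 (fun b => ginv g a b * zeta b).
Definition lam : C := sum4 (fun a => zeta a * zetaU a).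

Definition raise2 (T : 'I_4 -> 'I_4 -> C) (c d : 'I_4) : C :=
  sum4 (fun p => sum4 (fun q => ginv g c p * ginv g d q * T p q)).

Definition Fstar (a b : 'I_4) : C :=
  2^-1 * sum4 (fun c => sum4 (fun d => eta g a b c d * raise2 F c d)).
Definition FF (a b : 'I_4) : C := F a b + 'i * Fstar a b.

Definition Wstar (a b c d : 'I_4) : C :=
  2^-1 * sum4 (fun p => sum4 (fun q =>
     eta g c d p q * raise2 (W a b) p q)).
Definition CC (a b c d : 'I_4) : C := W a b c d + 'i * Wstar a b c d.

Definition sigma (a : 'I_4) : C := 2 * sum4 (fun b => FF a b * zetaU b).

Definition gam (a b : 'I_4) : C := zeta a * zeta b - lam * g a b.

Definition Tc (c : 'I_4) : C :=
  sum4 (fun m => sum4 (fun r => sum4 (fun d =>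
    CC c m r d * zetaU m * raise2 FF r d))).
Definition Uac (a c : 'I_4) : C :=
  sum4 (fun m => sum4 (fun r => zetaU m * zetaU r * CC m a r c)).

(* Simon tensor S_{abc}; [bc] = 1/2 (bc - cb) *)
Definition Simon (a b c : 'I_4) : C :=
  2^-1 * (gam a b * Tc c - gam a c * Tc b)
  + 4 * (2^-1 * (Uac a c * sigma b - Uac a b * sigma c)).

Definition SimonU (a b c : 'I_4) : C :=
  sum4 (fun p => sum4 (fun q => sum4 (fun r =>
    ginv g a p * ginv g b q * ginv g c r * Simon p q r))).

Definition SimonSq : C :=
  sum4 (fun a => sum4 (fun b => sum4 (fun c => Simon a b c * (SimonU a b c)^*))).

End Simon.

Definition antisym2 (C : numClosedFieldType) (F : 'I_4 -> 'I_4 -> C) :=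
  forall a b, F a b = - F b a.

Definition weyl_like (C : numClosedFieldType) (g : 'M[C]_4)
    (W : 'I_4 -> 'I_4 -> 'I_4 -> 'I_4 -> C) : Prop :=
  (forall a b c d, W a b c d \is Num.real) /\
  (forall a b c d, W a b c d = - W b a c d) /\
  (forall a b c d, W a b c d = - W a b d c) /\
  (forall a b c d, W a b c d = W c d a b) /\
  (forall a b c d, W a b c d + W a c d b + W a d b c = 0) /\
  (forall b d, sum4 (fun a => sum4 (fun c => ginv g a c * W a b c d)) = 0).

From Pilot Require Import Defs.
From HB Require Import structures.
From mathcomp Require Import all_boot all_order all_algebra.
From mathcomp Require Import ring.
From Stdlib Require Import FunctionalExtensionality.
Set Implicit Arguments. Unset Strict Implicit. Unset Printing Implicit Defensive.
Import Order.TTheory GRing.Theory Num.Theory.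
Local Open Scope ring_scope.

Local Notation tensor3 C := ('I_4 -> 'I_4 -> 'I_4 -> C).

(* All objects are components at the point x with respect to some basis of
   the tangent space, so the statement is one of linear algebra.
   1. The Simon tensor S_{abc} is orthogonal to zeta^a in each of its three
      indices ([Simon_orth]): zeta^a gamma_{ab} = 0, and every other
      contraction reduces to zeta^a zeta^b X_{ab} with X antisymmetric, X
      being built from the self-dual F_{ab} or the self-dual Weyl tensor,
      which inherit antisymmetry from F, C_{abcd} and the volume form.
   2. A Lorentzian metric has a real frame P with g^{ab} = (P D P^T)^{ab},
      D = diag(-1,1,1,1).  In this frame S_{abc} \bar S^{abc} becomes the
      Minkowski norm [mnorm3] T = sum_ijk D_i D_j D_k |T_ijk|^2 of the frame
      components T of S, which are orthogonal in each index to the frame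
      components of zeta, a timelike vector ([SimonSq_frame]).
   3. On the orthogonal complement of a timelike vector the Minkowski form is
      a positive combination of six squared moduli of linear forms (Lagrange's
      identity), three of which are the spatial coordinates.  Using this in
      each index writes [mnorm3] T as a positive combination of squared
      moduli: it is nonnegative, and it vanishes only if the spatial
      components of T vanish, hence (by orthogonality) all of T
      ([mnorm3_ge0], [mnorm3_eq0]). *)

Section IndexSums.
Variable C : numClosedFieldType.
Implicit Types f : 'I_4 -> C.

Definition o0 : 'I_4 := @Ordinal 4 0 erefl.
Definition o1 : 'I_4 := @Ordinal 4 1 erefl.
Definition o2 : 'I_4 := @Ordinal 4 2 erefl.
Definition o3 : 'I_4 := @Ordinal 4 3 erefl.

Lemma ord4_cases (i : 'I_4) : [\/ i = o0, i = o1, i = o2 | i = o3].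
Proof.
case: i => [[|[|[|[|n]]]] lt_i4] //.
- by constructor 1; apply: val_inj.
- by constructor 2; apply: val_inj.
- by constructor 3; apply: val_inj.
- by constructor 4; apply: val_inj.
Qed.

Lemma sum4E f : sum4 f = f o0 + f o1 + f o2 + f o3.
Proof.
rewrite /sum4 !big_ord_recl big_ord0 addr0 !addrA.
by congr (_ + _ + _ + _); congr f; apply: val_inj.
Qed.

Lemma eq_sum4 f1 f2 : (forall i, f1 i = f2 i) -> sum4 f1 = sum4 f2.
Proof. by move=> E; apply: eq_bigr => i _. Qed.

Lemma sum4_exch (h : 'I_4 -> 'I_4 -> C) :
  sum4 (fun i => sum4 (fun j => h i j)) = sum4 (fun j => sum4 (fun i => h i j)).
Proof. exact: exchange_big. Qed.

Lemma sum4_mull (k : C) f : k * sum4 f = sum4 (fun i => k * f i).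
Proof. exact: big_distrr. Qed.

Lemma sum4_mulr (k : C) f : sum4 f * k = sum4 (fun i => f i * k).
Proof. exact: big_distrl. Qed.

Lemma sum4N f : sum4 (fun i => - f i) = - sum4 f.
Proof. exact: sumrN. Qed.

Lemma sum4_conj f : (sum4 f)^* = sum4 (fun i => (f i)^*).
Proof. exact: rmorph_sum. Qed.

Lemma sum4_eq0 f : (forall i, f i = 0) -> sum4 f = 0.
Proof. by move=> E; apply: big1 => i _. Qed.

Lemma sum4_perm3 (f : 'I_4 -> 'I_4 -> 'I_4 -> C) :
  sum4 (fun a => sum4 (fun b => sum4 (fun p => f a b p))) =
  sum4 (fun p => sum4 (fun b => sum4 (fun a => f a b p))).
Proof.
rewrite sum4_exch; under eq_sum4 => b do rewrite sum4_exch.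
by rewrite sum4_exch.
Qed.

Lemma delta_sum f i : sum4 (fun a => (a == i)%:R * f a) = f i.
Proof.
rewrite sum4E.
by case: (ord4_cases i) => ->; rewrite /= !mul0r !mul1r ?add0r ?addr0.
Qed.

End IndexSums.

Section VolumeForm.
Variable C : numClosedFieldType.

(* The Levi-Civita symbol, hence the volume form, is antisymmetric in its
   first two indices: swapping them permutes two rows of its matrix. *)
Lemma levi_swap (a b c d : 'I_4) : levi C b a c d = - levi C a b c d.
Proof.
rewrite /levi.
set M := (\matrix_(i < 4, j < 4) ((nth a [:: a; b; c; d] i == j)%:R : C)).
transitivity (\det (row_perm (perm.tperm o0 o1) M)).
  congr (\det _); apply/matrixP => i j; rewrite [RHS]mxE.
  case: (ord4_cases i) => ->.
  - by rewrite perm.tpermL !mxE.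
  - by rewrite perm.tpermR !mxE.
  - by rewrite perm.tpermD // !mxE.
  - by rewrite perm.tpermD // !mxE.
by rewrite row_permE det_mulmx det_perm perm.odd_tperm /= expr1 mulN1r.
Qed.

Lemma eta_swap (g : 'M[C]_4) a b c d : Defs.eta g b a c d = - Defs.eta g a b c d.
Proof. by rewrite /Defs.eta levi_swap mulrN. Qed.

End VolumeForm.

Section Orthogonal.
Variable C : numClosedFieldType.
Implicit Types (u : 'I_4 -> C) (S : tensor3 C).
Definition orth1 u S := forall b c, sum4 (fun a => u a * S a b c) = 0.
Definition orth2 u S := forall a c, sum4 (fun b => u b * S a b c) = 0.
Definition orth3 u S := forall a b, sum4 (fun c => u c * S a b c) = 0.
Definition orth u S := [/\ orth1 u S, orth2 u S & orth3 u S].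
End Orthogonal.

Section Orthogonality.
Variable C : numClosedFieldType.
Variables (g : 'M[C]_4) (zeta : 'I_4 -> C) (F : 'I_4 -> 'I_4 -> C)
          (W : 'I_4 -> 'I_4 -> 'I_4 -> 'I_4 -> C).
Hypothesis g_sym : forall a b, g a b = g b a.
Hypothesis ginv_sym : forall a b, ginv g a b = ginv g b a.
Hypothesis ginvK : ginv g *m g = 1%:M.
Hypothesis F_anti : antisym2 F.
Hypothesis W_anti12 : forall a b c d, W a b c d = - W b a c d.
Hypothesis W_anti34 : forall a b c d, W a b c d = - W a b d c.

Lemma antisym_quad (u : 'I_4 -> C) (X : 'I_4 -> 'I_4 -> C) :
  (forall a m, X a m = - X m a) ->
  sum4 (fun a => sum4 (fun m => u a * u m * X m a)) = 0.
Proof.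
move=> X_anti; set s := sum4 _.
have s_opp : s = - s.
  rewrite {1}/s sum4_exch -sum4N; apply: eq_sum4 => a.
  by rewrite -sum4N; apply: eq_sum4 => m; rewrite X_anti; ring.
have /eqP : s *+ 2 = 0 by rewrite mulr2n {1}s_opp addNr.
by rewrite mulrn_eq0 /= => /eqP.
Qed.

(* The self-dual tensors are antisymmetric in the same index pairs as F_{ab}
   and C_{abcd}, because the volume form is antisymmetric. *)
Lemma FF_anti a b : FF g F a b = - FF g F b a.
Proof.
rewrite /FF /Fstar F_anti opprD -!mulrN -sum4N; congr (_ + _ * (_ * _)).
apply: eq_sum4 => c; rewrite -sum4N; apply: eq_sum4 => d.
by rewrite eta_swap mulNr.
Qed.

Lemma CC_anti12 a b c d : CC g W a b c d = - CC g W b a c d.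
Proof.
rewrite /CC /Wstar W_anti12 opprD -!mulrN -sum4N; congr (_ + _ * (_ * _)).
apply: eq_sum4 => p; rewrite -sum4N; apply: eq_sum4 => q.
rewrite /raise2 -mulrN -sum4N; congr (_ * _); apply: eq_sum4 => r.
by rewrite -sum4N; apply: eq_sum4 => s; rewrite W_anti12 mulrN.
Qed.

Lemma CC_anti34 a b c d : CC g W a b c d = - CC g W a b d c.
Proof.
rewrite /CC /Wstar W_anti34 opprD -!mulrN -sum4N; congr (_ + _ * (_ * _)).
apply: eq_sum4 => p; rewrite -sum4N; apply: eq_sum4 => q.
by rewrite eta_swap mulNr.
Qed.

Local Notation u := (zetaU g zeta).

Lemma zetaU_lower b : sum4 (fun a => u a * g a b) = zeta b.
Proof.
transitivity (sum4 (fun c => zeta c * (ginv g *m g) c b)).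
  rewrite /zetaU; under eq_sum4 => a do rewrite sum4_mulr.
  rewrite sum4_exch; apply: eq_sum4 => c; rewrite mxE sum4_mull.
  by apply: eq_sum4 => a; rewrite ginv_sym; ring.
rewrite ginvK; under eq_sum4 => c do rewrite mxE mulrC.
exact: delta_sum.
Qed.

Lemma lam_sym : sum4 (fun a => u a * zeta a) = lam g zeta.
Proof. by apply: eq_sum4 => a; rewrite mulrC. Qed.

Lemma gam_orth1 b : sum4 (fun a => u a * gam g zeta a b) = 0.
Proof.
transitivity (sum4 (fun a => u a * zeta a) * zeta b
   - lam g zeta * sum4 (fun a => u a * g a b)).
  by rewrite /gam !sum4E; ring.
by rewrite zetaU_lower lam_sym mulrC subrr.
Qed.

Lemma gam_orth2 a : sum4 (fun b => u b * gam g zeta a b) = 0.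
Proof.
transitivity (sum4 (fun b => u b * zeta b) * zeta a
   - lam g zeta * sum4 (fun b => u b * g b a)).
  by rewrite /gam !sum4E !(g_sym a); ring.
by rewrite zetaU_lower lam_sym mulrC subrr.
Qed.

(* The remaining building blocks are orthogonal to zeta because each contracts
   zeta with an antisymmetric index pair. *)
Lemma Uac_orth1 c : sum4 (fun a => u a * Uac g zeta W a c) = 0.
Proof.
rewrite -[RHS](@antisym_quad u (fun m a => sum4 (fun r => u r * CC g W m a r c))).
  apply: eq_sum4 => a; rewrite /Uac sum4_mull; apply: eq_sum4 => m.
  by rewrite [LHS]sum4_mull [RHS]sum4_mull; apply: eq_sum4 => r; ring.
by move=> a m; rewrite -sum4N; apply: eq_sum4 => r; rewrite CC_anti12 mulrN.
Qed.

Lemma Uac_orth2 a : sum4 (fun b => u b * Uac g zeta W a b) = 0.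
Proof.
rewrite -[RHS](@antisym_quad u (fun r b => sum4 (fun m => u m * CC g W m a r b))).
  apply: eq_sum4 => b; rewrite /Uac sum4_exch sum4_mull; apply: eq_sum4 => r.
  by rewrite [LHS]sum4_mull [RHS]sum4_mull; apply: eq_sum4 => m; ring.
by move=> b r; rewrite -sum4N; apply: eq_sum4 => m; rewrite CC_anti34 mulrN.
Qed.

Lemma Tc_orth : sum4 (fun b => u b * Tc g zeta F W b) = 0.
Proof.
rewrite -[RHS](@antisym_quad u (fun m b => sum4 (fun r => sum4 (fun d =>
    CC g W b m r d * raise2 g (FF g F) r d)))).
  apply: eq_sum4 => b; rewrite /Tc sum4_mull; apply: eq_sum4 => m.
  rewrite [LHS]sum4_mull [RHS]sum4_mull; apply: eq_sum4 => r.
  by rewrite [LHS]sum4_mull [RHS]sum4_mull; apply: eq_sum4 => d; ring.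
move=> b m; rewrite -sum4N; apply: eq_sum4 => r.
by rewrite -sum4N; apply: eq_sum4 => d; rewrite CC_anti12 mulNr.
Qed.

Lemma sigma_orth : sum4 (fun b => u b * sigma g zeta F b) = 0.
Proof.
rewrite -[RHS](mulr0 2) -(@antisym_quad u (fun d b => FF g F b d)); last first.
  by move=> b d; rewrite FF_anti.
rewrite sum4_mull; apply: eq_sum4 => b; rewrite /sigma !sum4_mull.
by apply: eq_sum4 => d; ring.
Qed.

Local Notation S := (Simon g zeta F W).

Lemma Simon_orth1 b c : sum4 (fun a => u a * S a b c) = 0.
Proof.
transitivity (2^-1 * (sum4 (fun a => u a * gam g zeta a b) * Tc g zeta F W c
   - sum4 (fun a => u a * gam g zeta a c) * Tc g zeta F W b)
  + 2 * (sum4 (fun a => u a * Uac g zeta W a c) * sigma g zeta F b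
   - sum4 (fun a => u a * Uac g zeta W a b) * sigma g zeta F c)).
  by rewrite /Simon !sum4E; field.
by rewrite !gam_orth1 !Uac_orth1; ring.
Qed.

Lemma Simon_orth2 a c : sum4 (fun b => u b * S a b c) = 0.
Proof.
transitivity (2^-1 * (sum4 (fun b => u b * gam g zeta a b) * Tc g zeta F W c
   - gam g zeta a c * sum4 (fun b => u b * Tc g zeta F W b))
  + 2 * (Uac g zeta W a c * sum4 (fun b => u b * sigma g zeta F b)
   - sum4 (fun b => u b * Uac g zeta W a b) * sigma g zeta F c)).
  by rewrite /Simon !sum4E; field.
by rewrite gam_orth2 Uac_orth2 Tc_orth sigma_orth; ring.
Qed.

(* S_{abc} is antisymmetric in b, c, so orthogonality in the third index
   follows from that in the second. *)
Lemma Simon_orth : orth u S.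
Proof.
split=> [b c|a c|a b]; first exact: Simon_orth1; first exact: Simon_orth2.
rewrite -[RHS]oppr0 -(Simon_orth2 a b) -sum4N; apply: eq_sum4 => c.
by rewrite /Simon; ring.
Qed.

End Orthogonality.

Section Frames.
Variable C : numClosedFieldType.
Implicit Types (M N : 'M[C]_4) (S X Y : tensor3 C) (x y v : 'I_4 -> C).

Lemma funext3 X Y : (forall a b c, X a b c = Y a b c) -> X = Y.
Proof.
move=> E; do 3 apply: functional_extensionality => ?; exact: E.
Qed.

Lemma mulmxE4 M N a b : (M *m N) a b = sum4 (fun p => M a p * N p b).
Proof. by rewrite mxE. Qed.

Definition mxv M x (a : 'I_4) : C := sum4 (fun i => M a i * x i).

Lemma mxv_mul M N x : mxv (M *m N) x = mxv M (mxv N x).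
Proof.
apply: functional_extensionality => a; rewrite /mxv !sum4E !mulmxE4 !sum4E; ring.
Qed.

Definition realm M := forall a b, (M a b)^* = M a b.

Definition contr1 M S : tensor3 C := fun i b c => sum4 (fun a => M a i * S a b c).
Definition contr2 M S : tensor3 C := fun a j c => sum4 (fun b => M b j * S a b c).
Definition contr3 M S : tensor3 C := fun a b k => sum4 (fun c => M c k * S a b c).

Definition tmap M S : tensor3 C := contr1 M (contr2 M (contr3 M S)).

Definition hpair X Y : C :=
  sum4 (fun a => sum4 (fun b => sum4 (fun c => X a b c * (Y a b c)^*))).

Lemma contr1_mul M N S : contr1 (N *m M) S = contr1 M (contr1 N S).
Proof. by apply: funext3 => i b c; rewrite /contr1 !sum4E !mulmxE4 !sum4E; ring. Qed.
Lemma contr2_mul M N S : contr2 (N *m M) S = contr2 M (contr2 N S).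
Proof. by apply: funext3 => i b c; rewrite /contr2 !sum4E !mulmxE4 !sum4E; ring. Qed.
Lemma contr3_mul M N S : contr3 (N *m M) S = contr3 M (contr3 N S).
Proof. by apply: funext3 => i b c; rewrite /contr3 !sum4E !mulmxE4 !sum4E; ring. Qed.

Lemma contr12 M N S : contr1 M (contr2 N S) = contr2 N (contr1 M S).
Proof. by apply: funext3 => i b c; rewrite /contr1 /contr2 !sum4E; ring. Qed.
Lemma contr13 M N S : contr1 M (contr3 N S) = contr3 N (contr1 M S).
Proof. by apply: funext3 => i b c; rewrite /contr1 /contr3 !sum4E; ring. Qed.
Lemma contr23 M N S : contr2 M (contr3 N S) = contr3 N (contr2 M S).
Proof. by apply: funext3 => i b c; rewrite /contr2 /contr3 !sum4E; ring. Qed.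

Lemma tmap_mul M N S : tmap (N *m M) S = tmap M (tmap N S).
Proof.
by rewrite /tmap contr1_mul contr2_mul contr3_mul ?(contr12, contr13, contr23).
Qed.

Lemma contr1_id S : contr1 1%:M S = S.
Proof.
apply: funext3 => i b c; rewrite /contr1; under eq_sum4 => a do rewrite mxE.
exact: delta_sum.
Qed.
Lemma contr2_id S : contr2 1%:M S = S.
Proof.
apply: funext3 => a j c; rewrite /contr2; under eq_sum4 => b do rewrite mxE.
exact: (delta_sum (fun b => S a b c)).
Qed.
Lemma contr3_id S : contr3 1%:M S = S.
Proof.
apply: funext3 => a b k; rewrite /contr3; under eq_sum4 => c do rewrite mxE.
exact: (delta_sum (fun c => S a b c)).
Qed.

Lemma tmapK M S : M \in unitmx -> tmap (invmx M) (tmap M S) = S.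
Proof.
by move=> Mu; rewrite -tmap_mul mulmxV // /tmap contr3_id contr2_id contr1_id.
Qed.

Lemma tmap0 M : tmap M (fun _ _ _ => 0) = (fun _ _ _ => 0).
Proof.
by apply: funext3 => a b c; rewrite /tmap /contr1 /contr2 /contr3 !sum4E; ring.
Qed.

Lemma sum_adj M x y : realm M ->
  sum4 (fun a => x a * (sum4 (fun p => M p a * y p))^*) =
  sum4 (fun p => sum4 (fun a => M^T a p * x a) * (y p)^*).
Proof.
move=> realM; under eq_sum4 => a do rewrite sum4_conj sum4_mull.
rewrite sum4_exch; apply: eq_sum4 => p; rewrite sum4_mulr; apply: eq_sum4 => a.
by rewrite rmorphM /= realM mxE; ring.
Qed.

Lemma hpair_tmap M X Y : realm M -> hpair X (tmap M Y) = hpair (tmap M^T X) Y.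
Proof.
move=> realM.
have hpair_contr3 X' Y' : hpair X' (contr3 M Y') = hpair (contr3 M^T X') Y'.
  by do 2 apply: eq_sum4 => ?; exact: sum_adj.
have hpair_contr2 X' Y' : hpair X' (contr2 M Y') = hpair (contr2 M^T X') Y'.
  apply: eq_sum4 => a; rewrite [LHS]sum4_exch [RHS]sum4_exch.
  by apply: eq_sum4 => c; exact: sum_adj.
have hpair_contr1 X' Y' : hpair X' (contr1 M Y') = hpair (contr1 M^T X') Y'.
  rewrite /hpair [LHS]sum4_exch [RHS]sum4_exch; apply: eq_sum4 => b.
  rewrite [LHS]sum4_exch [RHS]sum4_exch; apply: eq_sum4 => c.
  exact: sum_adj.
rewrite /tmap hpair_contr1 hpair_contr2 hpair_contr3.
by rewrite ?(contr12, contr13, contr23).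
Qed.

Lemma orth1_contr1 M v S : orth1 (mxv M v) S -> orth1 v (contr1 M S).
Proof. by move=> H b c; rewrite -(H b c) /mxv /contr1 !sum4E; ring. Qed.
Lemma orth2_contr2 M v S : orth2 (mxv M v) S -> orth2 v (contr2 M S).
Proof. by move=> H a c; rewrite -(H a c) /mxv /contr2 !sum4E; ring. Qed.
Lemma orth3_contr3 M v S : orth3 (mxv M v) S -> orth3 v (contr3 M S).
Proof. by move=> H a b; rewrite -(H a b) /mxv /contr3 !sum4E; ring. Qed.

Lemma orth1_contr2 M u S : orth1 u S -> orth1 u (contr2 M S).
Proof.
move=> H b c; transitivity (sum4 (fun q => M q b * sum4 (fun a => u a * S a q c))).
  by rewrite /contr2 !sum4E; ring.
by apply: sum4_eq0 => q; rewrite H mulr0.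
Qed.
Lemma orth1_contr3 M u S : orth1 u S -> orth1 u (contr3 M S).
Proof.
move=> H b c; transitivity (sum4 (fun q => M q c * sum4 (fun a => u a * S a b q))).
  by rewrite /contr3 !sum4E; ring.
by apply: sum4_eq0 => q; rewrite H mulr0.
Qed.
Lemma orth2_contr1 M u S : orth2 u S -> orth2 u (contr1 M S).
Proof.
move=> H a c; transitivity (sum4 (fun q => M q a * sum4 (fun b => u b * S q b c))).
  by rewrite /contr1 !sum4E; ring.
by apply: sum4_eq0 => q; rewrite H mulr0.
Qed.
Lemma orth2_contr3 M u S : orth2 u S -> orth2 u (contr3 M S).
Proof.
move=> H a c; transitivity (sum4 (fun q => M q c * sum4 (fun b => u b * S a b q))).
  by rewrite /contr3 !sum4E; ring.
by apply: sum4_eq0 => q; rewrite H mulr0.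
Qed.
Lemma orth3_contr1 M u S : orth3 u S -> orth3 u (contr1 M S).
Proof.
move=> H a b; transitivity (sum4 (fun q => M q a * sum4 (fun c => u c * S q b c))).
  by rewrite /contr1 !sum4E; ring.
by apply: sum4_eq0 => q; rewrite H mulr0.
Qed.
Lemma orth3_contr2 M u S : orth3 u S -> orth3 u (contr2 M S).
Proof.
move=> H a b; transitivity (sum4 (fun q => M q b * sum4 (fun c => u c * S a q c))).
  by rewrite /contr2 !sum4E; ring.
by apply: sum4_eq0 => q; rewrite H mulr0.
Qed.

Lemma orth_tmap M v S : orth (mxv M v) S -> orth v (tmap M S).
Proof.
case=> o1 o2 o3; split.
- by apply/orth1_contr1/orth1_contr2/orth1_contr3.
- by apply/orth2_contr1/orth2_contr2/orth2_contr3.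
- by apply/orth3_contr1/orth3_contr2/orth3_contr3.
Qed.

End Frames.

Section Minkowski.
Variable C : numClosedFieldType.
Local Notation D := (minkowski_diag C).

Definition msign (i : 'I_4) : C := if i == ord0 then -1 else 1.

Lemma msign_conj i : (msign i)^* = msign i.
Proof. by rewrite /msign; case: ifP; rewrite ?rmorphN rmorph1. Qed.

Lemma minkowski_diagE a b : D a b = (a == b)%:R * msign a.
Proof. by rewrite !mxE mulr_natl. Qed.

Lemma minkowski_diag_sq : D *m D = 1%:M.
Proof.
rewrite /minkowski_diag mulmx_diag; apply/matrixP => a b; rewrite !mxE.
by case: ifP => _; rewrite ?mulrNN mulr1.
Qed.

Lemma minkowski_diag_tr : D^T = D.
Proof. exact: tr_diag_mx. Qed.

Lemma mxv_minkowski x : mxv D x = fun i => msign i * x i.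
Proof.
apply: functional_extensionality => i; rewrite /mxv.
under eq_sum4 => j do rewrite minkowski_diagE eq_sym -mulrA.
exact: (delta_sum (fun j => msign i * x j)).
Qed.

Lemma contr1_minkowski X : contr1 D X = (fun i b c => msign i * X i b c).
Proof.
apply: funext3 => a b c; rewrite /contr1.
under eq_sum4 => i do rewrite minkowski_diagE -mulrA.
exact: (delta_sum (fun i => msign i * X i b c)).
Qed.
Lemma contr2_minkowski X : contr2 D X = (fun a j c => msign j * X a j c).
Proof.
apply: funext3 => a b c; rewrite /contr2.
under eq_sum4 => i do rewrite minkowski_diagE -mulrA.
exact: (delta_sum (fun i => msign i * X a i c)).
Qed.
Lemma contr3_minkowski X : contr3 D X = (fun a b k => msign k * X a b k).
Proof.
apply: funext3 => a b c; rewrite /contr3.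
under eq_sum4 => i do rewrite minkowski_diagE -mulrA.
exact: (delta_sum (fun i => msign i * X a b i)).
Qed.

Definition mnorm1 (x : 'I_4 -> C) : C := sum4 (fun i => msign i * (x i * (x i)^*)).
Definition mnorm2 (U : 'I_4 -> 'I_4 -> C) : C :=
  sum4 (fun k => msign k * mnorm1 (fun j => U j k)).
Definition mnorm3 (T : tensor3 C) : C :=
  sum4 (fun k => msign k * sum4 (fun j => msign j * mnorm1 (fun i => T i j k))).

Lemma hpair_minkowski T : hpair T (tmap D T) = mnorm3 T.
Proof.
rewrite /tmap contr3_minkowski contr2_minkowski contr1_minkowski.
rewrite /hpair /mnorm3 /mnorm1 sum4_perm3.
apply: eq_sum4 => k; rewrite sum4_mull; apply: eq_sum4 => j.
rewrite mulrA sum4_mull; apply: eq_sum4 => i.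
by rewrite !rmorphM /= !msign_conj; ring.
Qed.
End Minkowski.
Arguments msign {C} i.

(* Sums of six terms, indexed by the six linear forms of Lagrange's identity. *)
Definition sum6 (C : numClosedFieldType) (f : nat -> C) : C :=
  f 0%N + f 1%N + f 2%N + f 3%N + f 4%N + f 5%N.

Lemma eq_sum6 (C : numClosedFieldType) (f1 f2 : nat -> C) :
  (forall m, f1 m = f2 m) -> sum6 f1 = sum6 f2.
Proof. by move=> E; rewrite /sum6 !E. Qed.

Lemma sum6_eq0 (C : numClosedFieldType) (f : nat -> C) :
  (forall m, 0 <= f m) -> sum6 f = 0 -> forall m, (m < 6)%N -> f m = 0.
Proof.
move=> f_ge0 /eqP; rewrite /sum6 !paddr_eq0 ?addr_ge0 //.
move=> /andP[/andP[/andP[/andP[/andP[/eqP h0 /eqP h1] /eqP h2] /eqP h3] /eqP h4] /eqP h5].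
by case=> [|[|[|[|[|[|m]]]]]].
Qed.

Lemma sum46 (C : numClosedFieldType) (a : 'I_4 -> C) (f : nat -> 'I_4 -> C) :
  sum4 (fun k => a k * sum6 (fun m => f m k)) =
  sum6 (fun m => sum4 (fun k => a k * f m k)).
Proof. by rewrite /sum6 !sum4E; ring. Qed.

Section Positivity.
Variable C : numClosedFieldType.
Variable z : 'I_4 -> C.
Hypothesis z_real : forall i, (z i)^* = z i.

Definition mlam : C := sum4 (fun i => msign i * (z i * z i)).
Hypothesis z_timelike : mlam < 0.

Definition zup (i : 'I_4) : C := msign i * z i.
Definition dotz (x : 'I_4 -> C) : C := sum4 (fun i => zup i * x i).

Lemma z0_neq0 : z o0 != 0.
Proof.
apply/negP => /eqP z0.
have z_sq i : 0 <= z i * z i by rewrite -{2}(z_real i) mul_conjC_ge0.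
have : 0 <= mlam.
  by rewrite /mlam sum4E z0 mulr0 mulr0 add0r /msign /= !mul1r !addr_ge0.
by move=> /le_lt_trans/(_ z_timelike); rewrite ltxx.
Qed.

Lemma z0_sq_gt0 : 0 < z o0 * z o0.
Proof. by rewrite -{2}(z_real o0) mul_conjC_gt0 z0_neq0. Qed.

(* Lagrange's identity: for x orthogonal to z, with x_0 eliminated,
   mnorm1 x = (-mlam |x_s|^2 + sum_{i<j} |z_i x_j - z_j x_i|^2) / z_0^2. *)
Definition ell (m : nat) (x : 'I_4 -> C) : C :=
  match m with
  | 0%N => x o1
  | 1%N => x o2
  | 2%N => x o3
  | 3%N => z o1 * x o2 - z o2 * x o1
  | 4%N => z o1 * x o3 - z o3 * x o1
  | 5%N => z o2 * x o3 - z o3 * x o2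
  | _ => 0
  end.

Definition mu (m : nat) : C :=
  if (m < 3)%N then - mlam / (z o0 * z o0) else 1 / (z o0 * z o0).

Lemma mu_gt0 m : 0 < mu m.
Proof.
by rewrite /mu; case: ifP => _; rewrite divr_gt0 ?z0_sq_gt0 ?oppr_gt0.
Qed.

Lemma mnorm1_lagrange x : dotz x = 0 ->
  mnorm1 x = sum6 (fun m => mu m * (ell m x * (ell m x)^*)).
Proof.
move=> xz.
have x0E : x o0 = (z o1 * x o1 + z o2 * x o2 + z o3 * x o3) / z o0.
  apply: (canRL (mulfK z0_neq0)); apply/eqP; rewrite -subr_eq0 -oppr_eq0.
  by apply/eqP; rewrite -[RHS]xz /dotz /zup sum4E /msign /=; ring.
have x0cE : (x o0)^* = (z o1 * (x o1)^* + z o2 * (x o2)^* + z o3 * (x o3)^*) / z o0.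
  by rewrite x0E rmorphM /= fmorphV /= !rmorphD /= !rmorphM /= !z_real.
rewrite /mnorm1 /sum6 /mu /ell /= sum4E x0cE x0E /mlam sum4E /msign /=.
by rewrite !(rmorphB, rmorphM) /= !z_real; field; exact: z0_neq0.
Qed.

Lemma ell_orth m (Y : 'I_4 -> 'I_4 -> C) :
  (forall i, dotz (Y i) = 0) -> dotz (fun j => ell m (fun i => Y i j)) = 0.
Proof.
move=> Yz.
have lin2 (a b : C) p q :
    dotz (fun j => a * Y p j - b * Y q j) = a * dotz (Y p) - b * dotz (Y q).
  by rewrite /dotz !sum4E; ring.
case: m => [|[|[|[|[|[|m]]]]]] /=; rewrite ?lin2 ?Yz ?subrr ?mulr0 ?subr0 //.
by rewrite /dotz sum4E; ring.
Qed.

Lemma mnorm2_lagrange U : (forall k, dotz (fun j => U j k) = 0) ->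
  mnorm2 U = sum6 (fun m => mu m * mnorm1 (fun k => ell m (fun j => U j k))).
Proof.
move=> Uz; rewrite /mnorm2; under eq_sum4 => k do rewrite mnorm1_lagrange //.
by rewrite sum46; apply: eq_sum6 => m; rewrite /mnorm1 !sum4E; ring.
Qed.

Lemma mnorm3_lagrange T : (forall j k, dotz (fun i => T i j k) = 0) ->
  mnorm3 T = sum6 (fun m => mu m * mnorm2 (fun j k => ell m (fun i => T i j k))).
Proof.
move=> Tz; rewrite /mnorm3.
under eq_sum4 => k do (under eq_sum4 => j do rewrite mnorm1_lagrange //; rewrite sum46).
by rewrite sum46; apply: eq_sum6 => m; rewrite /mnorm2 /mnorm1 !sum4E; ring.
Qed.

Definition ell3 (T : tensor3 C) m1 m2 m3 : C :=
  ell m3 (fun k => ell m2 (fun j => ell m1 (fun i => T i j k))).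

Lemma mnorm3_sos T : orth zup T ->
  mnorm3 T = sum6 (fun m1 => mu m1 * sum6 (fun m2 => mu m2 * sum6 (fun m3 =>
     mu m3 * (ell3 T m1 m2 m3 * (ell3 T m1 m2 m3)^*)))).
Proof.
case=> Tz1 Tz2 Tz3; rewrite mnorm3_lagrange; last by move=> j k; exact: Tz1.
apply: eq_sum6 => m1; rewrite mnorm2_lagrange; last first.
  by move=> k; apply: ell_orth => i; exact: Tz2.
congr (_ * _); apply: eq_sum6 => m2; rewrite mnorm1_lagrange //.
by apply: ell_orth => j; apply: ell_orth => i; exact: Tz3.
Qed.

Lemma wsum6_ge0 (f : nat -> C) : (forall m, 0 <= f m) ->
  0 <= sum6 (fun m => mu m * f m).
Proof.
by move=> f_ge0; rewrite /sum6 !addr_ge0 // mulr_ge0 // ltW // mu_gt0.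
Qed.

Lemma wsum6_eq0 (f : nat -> C) : (forall m, 0 <= f m) ->
  sum6 (fun m => mu m * f m) = 0 -> forall m, (m < 6)%N -> f m = 0.
Proof.
move=> f_ge0 /sum6_eq0 wf0 m lt_m6; apply/eqP.
have /eqP := wf0 (fun m => mulr_ge0 (ltW (mu_gt0 m)) (f_ge0 m)) m lt_m6.
by rewrite mulf_eq0 gt_eqF ?mu_gt0.
Qed.

Lemma mnorm3_ge0 T : orth zup T -> 0 <= mnorm3 T.
Proof.
move=> Tz; rewrite mnorm3_sos //.
by do 3 apply: wsum6_ge0 => ?; exact: mul_conjC_ge0.
Qed.

Lemma spatial_zero x : dotz x = 0 -> (forall i, i != o0 -> x i = 0) ->
  forall i, x i = 0.
Proof.
move=> xz xs i; case: (eqVneq i o0) => [->|]; last exact: xs.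
move: xz; rewrite /dotz /zup sum4E (xs o1) // (xs o2) // (xs o3) //.
rewrite !mulr0 !addr0 => /eqP.
by rewrite !mulf_eq0 (negbTE z0_neq0) /msign /= oppr_eq0 oner_eq0 => /eqP.
Qed.

Lemma ell_spatial (i : 'I_4) : i != o0 ->
  exists2 m, (m < 6)%N & forall x : 'I_4 -> C, ell m x = x i.
Proof. by case: (ord4_cases i) => -> // _; [exists 0%N|exists 1%N|exists 2%N]. Qed.

Lemma mnorm3_eq0 T : orth zup T -> mnorm3 T = 0 -> forall i j k, T i j k = 0.
Proof.
move=> Tz; have [Tz1 Tz2 Tz3] := Tz; rewrite mnorm3_sos // => T0.
have ell3_0 m1 m2 m3 :
    (m1 < 6)%N -> (m2 < 6)%N -> (m3 < 6)%N -> ell3 T m1 m2 m3 = 0.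
  move=> h1 h2 h3; apply/eqP; rewrite -mul_conjC_eq0; apply/eqP.
  have sq_ge0 m1' m2' m3' := mul_conjC_ge0 (ell3 T m1' m2' m3').
  have ge0_3 m1' m2' := wsum6_ge0 (sq_ge0 m1' m2').
  have ge0_2 m1' := wsum6_ge0 (ge0_3 m1').
  move: (wsum6_eq0 ge0_2 T0 h1) => /(wsum6_eq0 (ge0_3 m1))/(_ _ h2).
  by move=> /(wsum6_eq0 (sq_ge0 m1 m2))/(_ _ h3).
have T_spatial i j k : i != o0 -> j != o0 -> k != o0 -> T i j k = 0.
  move=> /ell_spatial[m1 h1 e1] /ell_spatial[m2 h2 e2] /ell_spatial[m3 h3 e3].
  by have := ell3_0 _ _ _ h1 h2 h3; rewrite /ell3 e3 e2 e1.
have T_jk i j k : j != o0 -> k != o0 -> T i j k = 0.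
  move=> hj hk; apply: (spatial_zero (x := fun i => T i j k)) => [|i' hi].
    exact: Tz1.
  exact: T_spatial.
have T_k i j k : k != o0 -> T i j k = 0.
  move=> hk; apply: (spatial_zero (x := fun j => T i j k)) => [|j' hj].
    exact: Tz2.
  exact: T_jk.
move=> i j k; apply: (spatial_zero (x := fun k => T i j k)) => [|k' hk].
  exact: Tz3.
exact: T_k.
Qed.

End Positivity.

Section LorentzFrame.
Variable C : numClosedFieldType.
Local Notation D := (minkowski_diag C).

Lemma real_mx_conj (M : 'M[C]_4) : real_mx M -> realm M.
Proof. by move=> M_real a b; rewrite conj_Creal. Qed.

Lemma ginv_frame (g P : 'M[C]_4) : P^T *m g *m P = D ->
  g \in unitmx /\ ginv g = P *m D *m P^T.
Proof.
move=> gP.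
have g_rinv : g *m (P *m D *m P^T) = 1%:M.
  have : P^T *m (g *m P *m D) = 1%:M by rewrite !mulmxA gP minkowski_diag_sq.
  by move/mulmx1C; rewrite !mulmxA.
have g_unit := (mulmx1_unit g_rinv).1.
by split=> //; rewrite /ginv -[invmx g]mulmx1 -g_rinv mulKmx.
Qed.

Variables (g P : 'M[C]_4) (zeta : 'I_4 -> C) (F : 'I_4 -> 'I_4 -> C)
          (W : 'I_4 -> 'I_4 -> 'I_4 -> 'I_4 -> C).
Hypothesis P_real : realm P.
Hypothesis ginvE : ginv g = P *m D *m P^T.

Lemma ginv_tr : (ginv g)^T = ginv g.
Proof. by rewrite ginvE !trmx_mul trmxK minkowski_diag_tr mulmxA. Qed.

Local Notation z := (mxv P^T zeta).

Lemma zetaU_frame : zetaU g zeta = mxv P (zup z).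
Proof.
change (zetaU g zeta) with (mxv (ginv g) zeta).
by rewrite ginvE !mxv_mul mxv_minkowski.
Qed.

Lemma lam_frame : lam g zeta = mlam z.
Proof.
rewrite /lam zetaU_frame /mlam.
transitivity (sum4 (fun i => z i * zup z i)).
  rewrite /mxv; under eq_sum4 => a do rewrite sum4_mull.
  rewrite sum4_exch; apply: eq_sum4 => i; rewrite sum4_mulr.
  by apply: eq_sum4 => a; rewrite mxE; ring.
by apply: eq_sum4 => i; rewrite /zup; ring.
Qed.

Lemma frame_real : real_vec zeta -> forall i, (z i)^* = z i.
Proof.
move=> zeta_real i; rewrite /mxv sum4_conj; apply: eq_sum4 => a.
by rewrite rmorphM /= mxE P_real conj_Creal.
Qed.

Local Notation S := (Simon g zeta F W).

Lemma SimonU_tmap : SimonU g zeta F W = tmap (ginv g)^T S.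
Proof.
apply: funext3 => a b c; rewrite /SimonU /tmap /contr1 /contr2 /contr3.
apply: eq_sum4 => p; rewrite [RHS]sum4_mull; apply: eq_sum4 => q.
rewrite [RHS]mulrA [RHS]sum4_mull; apply: eq_sum4 => r.
by rewrite !mxE; ring.
Qed.

Lemma SimonSq_frame : SimonSq g zeta F W = mnorm3 (tmap P S).
Proof.
have P_real_tr : realm P^T by move=> a b; rewrite mxE P_real.
change (SimonSq g zeta F W) with (hpair S (SimonU g zeta F W)).
rewrite -hpair_minkowski.
by rewrite SimonU_tmap ginv_tr ginvE !tmap_mul hpair_tmap // trmxK.
Qed.

End LorentzFrame.

Theorem mainTheorem12 (C : numClosedFieldType) (g : 'M[C]_4)
  (zeta : 'I_4 -> C) (F : 'I_4 -> 'I_4 -> C)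
  (W : 'I_4 -> 'I_4 -> 'I_4 -> 'I_4 -> C) :
  lorentzian g ->
  real_vec zeta ->
  (forall a b, F a b \is Num.real) ->
  antisym2 F ->
  weyl_like g W ->
  lam g zeta < 0 ->
  0 <= SimonSq g zeta F W /\
  (SimonSq g zeta F W = 0 <-> forall a b c, Simon g zeta F W a b c = 0).
Proof.
move=> [_ [g_tr [P [/real_mx_conj P_real [P_unit gP]]]]] zeta_real _ F_anti.
move=> [_ [W_anti12 [W_anti34 _]]] timelike.
have [g_unit ginvE] := ginv_frame gP.
have g_sym a b : g a b = g b a by rewrite -[in LHS]g_tr mxE.
have ginv_sym a b : ginv g a b = ginv g b a.
  by rewrite -[in LHS](ginv_tr ginvE) mxE.
have ginvK : ginv g *m g = 1%:M by rewrite /ginv mulVmx.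
set z := mxv P^T zeta; set S := Simon g zeta F W.
have z_real := frame_real P_real zeta_real.
have z_timelike : mlam z < 0 by rewrite -(lam_frame zeta ginvE).
have T_orth : orth (zup z) (tmap P S).
  by apply: orth_tmap; rewrite -(zetaU_frame zeta ginvE); exact: Simon_orth.
have SimonSqE := SimonSq_frame zeta F W P_real ginvE.
split; first by rewrite SimonSqE; exact: mnorm3_ge0.
split=> [|S0].
  rewrite SimonSqE => /(mnorm3_eq0 z_real z_timelike T_orth) T0 a b c.
  by rewrite -(tmapK S P_unit) (funext3 T0) tmap0.
rewrite /SimonSq; do 3 (apply: sum4_eq0 => ?).
by rewrite -/S S0 mul0r.
Qed.
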